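(* Let $N\ge0$ be an even integer and let $a=(a_0,a_1,\dots,a_N)\in\mathbb N^{N+1}$ satisfy $a_0\le a_1\le\dots\le a_N$, $a_0<a_2<a_4<\cdots$ and $a_1<a_3<a_5<\cdots$. Let $\mathcal J=\{i\in[0,N]: a_i$ appears exactly once in the sequence $a\}$; then $\mathcal J=\{i_0<i_1<\dots<i_{2M}\}$ for some $M\in\mathbb N$ with $i_s\equiv s\pmod 2$, and $i_{s+1}=i_s+2m_s+1$ with $m_s\in\mathbb N$ for $s\in[0,2M-1]$. Let $\mathcal E$ be the set of $b=(b_0,\dots,b_N)\in\mathbb N^{N+1}$ with $b_0<b_2<b_4<\cdots$, $b_1<b_3<b_5<\cdots$ and such that the multisets $\{b_0,\dots,b_N\}$ and $\{a_0,\dots,a_N\}$ coincide. For $b\in\mathcal E$ let $\hat b=(b_0,b_1+1,b_2+1,b_3+2,b_4+2,\dots,b_{N-1}+N/2,b_N+N/2)$, i.e. $\hat b_i=b_i+\lceil i/2\rceil$. For $X\subset\{1,3,\dots,2M-1\}$ define $a^X\in\mathcal E$ by: for $s\in X$, $(a^X_{i_s},a^X_{i_s+1},a^X_{i_s+2},a^X_{i_s+3},\dots,a^X_{i_s+2m_s},a^X_{i_s+2m_s+1})=(a_{i_s+1},a_{i_s},a_{i_s+3},a_{i_s+2},\dots,a_{i_s+2m_s+1},a_{i_s+2m_s})$, and $a^X_i=a_i$ for all other $i\in[0,N]$. If $b\in\mathcal E$ is such that the multiset $\{\hat b_0,\dots,\hat b_N\}$ equals the multiset $\{\hat a_0,\dots,\hat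 a_N\}$, then there exists $X\subset\{1,3,\dots,2M-1\}$ with $b=a^X$. *)

From mathcomp Require Export all_boot.
Set Implicit Arguments. Unset Strict Implicit. Unset Printing Implicit Defensive.

Definition step2_incr (s : seq nat) : Prop :=
  forall i, i.+2 < size s -> nth 0 s i < nth 0 s i.+2.

Definition Jseq (a : seq nat) : seq nat :=
  [seq i <- iota 0 (size a) | count_mem (nth 0 a i) a == 1].

Definition hat (b : seq nat) : seq nat :=
  [seq nth 0 b i + uphalf i | i <- iota 0 (size b)].

Definition in_block (J : seq nat) (i s : nat) : bool :=
  (nth 0 J s <= i) && (i <= nth 0 J s.+1).

(* a^X : for s in X, swap the pairs (i_s + 2k, i_s + 2k + 1), k = 0..m_s;
   other entries unchanged. *)
Definition aX (a : seq nat) (X : seq nat) : seq nat :=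
  let J := Jseq a in
  [seq (let s := nth 0 X (find (in_block J i) X) in
        if has (in_block J i) X then
          (if ~~ odd (i - nth 0 J s) then nth 0 a i.+1 else nth 0 a i.-1)
        else nth 0 a i)
  | i <- iota 0 (size a)].

From mathcomp Require Import all_boot zify.

Set Implicit Arguments.
Unset Strict Implicit.
Unset Printing Implicit Defensive.

(* Comparing the largest hats of [a] and [b] shows, peeling two entries at a
   time from the right, that [b_0 = a_0] and that each pair
   [(b_{2k+1}, b_{2k+2})] is [(a_{2k+1}, a_{2k+2})] or its swap.  As [a] is
   sorted with [a_i < a_{i+2}], equal entries of [a] are adjacent; a repeated
   value [a_{2k+2} = a_{2k+3}] forces pairs [k] and [k+1] to be swapped
   together, and [b_0 < b_2] forbids swapping pair [0] when [a_0 = a_1].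
   Hence the swapped pairs fill runs from a unique entry [i_s] at an odd index
   to the next one [i_{s+1}]; since [i_s = s (mod 2)], [s] is odd, and [b] is
   [a^X] for the set [X] of these [s]. *)

Lemma hat_cat_pair (s : seq nat) x y :
  hat (s ++ [:: x; y]) = hat s ++ [:: x + uphalf (size s); y + uphalf (size s).+1].
Proof.
rewrite /hat size_cat /= -addn2 iotaD map_cat add0n /=; congr (_ ++ _).
  by apply/eq_in_map => i; rewrite mem_iota add0n /= => ltis; rewrite nth_cat ltis.
by rewrite !nth_cat ltnn subnn ltnNge leqnSn /= subSnn.
Qed.

Lemma step2_incr_catl (s t : seq nat) : step2_incr (s ++ t) -> step2_incr s.
Proof.
move=> st_step2 i lti; have := st_step2 i; rewrite size_cat !nth_cat lti.
by rewrite (_ : i < size s) //; [apply; lia | lia].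
Qed.

Lemma perm_pair (u v x y : nat) : perm_eq [:: u; v] [:: x; y] ->
  (u = x /\ v = y) \/ (u = y /\ v = x).
Proof.
move=> uv_xy; have : x \in [:: u; v] by rewrite (perm_mem uv_xy) mem_head.
rewrite !inE => /orP [/eqP xu | /eqP xv]; subst x.
  by move: uv_xy; rewrite perm_cons => /perm_small_eq => /(_ isT) [->]; left.
have vu_vy : perm_eq [:: v; u] [:: v; y].
  by apply: perm_trans uv_xy; rewrite (perm_catC [:: v]).
by move: vu_vy; rewrite perm_cons => /perm_small_eq => /(_ isT) [->]; right.
Qed.

Definition pair_at (s : seq nat) k := [:: nth 0 s k.*2.+1; nth 0 s k.*2.+2].

Lemma hat_ub (s : seq nat) c : {in s, forall z, z <= c} ->
  {in hat s, forall z, z <= c + uphalf (size s).-1}.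
Proof.
move=> s_le z /mapP [j]; rewrite mem_iota add0n /= => ltj ->.
by rewrite leq_add ?s_le ?mem_nth ?uphalf_leq //; lia.
Qed.

Lemma perm_cat_pair_ub (a' b' : seq nat) x y u v :
  sorted leq (a' ++ [:: x; y]) -> step2_incr (b' ++ [:: u; v]) ->
  perm_eq (b' ++ [:: u; v]) (a' ++ [:: x; y]) ->
  [/\ x <= y, {in a', forall z, z <= x} & {in b', forall z, z <= x}].
Proof.
move=> a_sorted b_step2 b_perm.
move: a_sorted; rewrite sorted_pairwise; last exact: leq_trans.
rewrite pairwise_cat /= !andbT => /and3P [/allrelP a'_le _ le_xy].
have a'_le_x z : z \in a' -> z <= x by move=> za'; apply: a'_le; rewrite ?inE ?eqxx.
have le_y z : z \in a' ++ [:: x; y] -> z <= y.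
  rewrite mem_cat => /orP [za' | ]; first by apply: a'_le; rewrite // !inE eqxx orbT.
  by rewrite !inE => /orP [] /eqP ->.
have lt_y_le_x z : z \in a' ++ [:: x; y] -> z < y -> z <= x.
  rewrite mem_cat => /orP [/a'_le_x // | ].
  by rewrite !inE => /orP [] /eqP -> //; rewrite ltnn.
split=> // _ /(nthP 0) [j ltj <-].
have b_in i : i < size (b' ++ [:: u; v]) -> nth 0 (b' ++ [:: u; v]) i \in a' ++ [:: x; y].
  by move=> lti; rewrite -(perm_mem b_perm) mem_nth.
have lt_j2 : j.+2 < size (b' ++ [:: u; v]) by rewrite size_cat addn2 !ltnS.
have := b_step2 j lt_j2; rewrite (nth_cat _ b' _ j) ltj => lt_bj.
apply: lt_y_le_x; last exact: leq_trans lt_bj (le_y _ (b_in _ lt_j2)).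
by have := b_in j (ltn_trans (ltnSn j) (ltnW lt_j2)); rewrite nth_cat ltj.
Qed.

(* The hats of the first [n.*2.+1] entries are at most [x + n], while both
   hats of the last pair of [a] exceed it; so do those of the last pair of
   [b], which is therefore a permutation of the last pair of [a]. *)
Lemma hat_perm_last_pair n (a' b' : seq nat) x y u v :
  size a' = n.*2.+1 -> size b' = n.*2.+1 ->
  sorted leq (a' ++ [:: x; y]) -> step2_incr (b' ++ [:: u; v]) ->
  perm_eq (b' ++ [:: u; v]) (a' ++ [:: x; y]) ->
  perm_eq (hat (b' ++ [:: u; v])) (hat (a' ++ [:: x; y])) ->
  perm_eq [:: u; v] [:: x; y].
Proof.
move=> size_a' size_b' a_sorted b_step2 b_perm.
have [le_xy a'_le b'_le] := perm_cat_pair_ub a_sorted b_step2 b_perm.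
pose P z := x + n.+1 <= z.
have hat_low s : size s = n.*2.+1 -> {in s, forall z, z <= x} -> filter P (hat s) = [::].
  move=> size_s /hat_ub s_le; apply/eqP; rewrite -[_ == _]negbK -has_filter.
  by apply/hasPn => z /s_le; rewrite size_s /= uphalf_double /P; lia.
rewrite !hat_cat_pair size_a' size_b' /= doubleK uphalf_double => /(perm_filter P).
have [Px Py] : P (x + n.+1) /\ P (y + n.+1) by rewrite /P leqnn leq_add2r.
rewrite !filter_cat !hat_low //= Px Py.
case: (P (u + n.+1)); case: (P (v + n.+1)) => // /[dup] /perm_size //.
by move=> _ /(perm_map (subn^~ n.+1)); rewrite /= !addnK.
Qed.

Lemma hat_perm_pairs m (a b : seq nat) :
  size a = m.*2.+1 -> size b = m.*2.+1 ->
  sorted leq a -> step2_incr b -> perm_eq b a -> perm_eq (hat b) (hat a) ->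
  nth 0 b 0 = nth 0 a 0 /\ forall k, k < m -> perm_eq (pair_at b k) (pair_at a k).
Proof.
elim: m a b => [|m IH] a b.
  case: a => [|a0 [|? ?]] //; case: b => [|b0 [|? ?]] // _ _ _ _ b_perm _.
  have : b0 \in [:: a0] by rewrite -(perm_mem b_perm) mem_head.
  by rewrite inE => /eqP ->.
case/lastP: a => [|a1 y] //; case/lastP: a1 => [|a' x]; first by rewrite /= doubleS.
case/lastP: b => [|b1 v] //; case/lastP: b1 => [|b' u]; first by rewrite /= doubleS.
rewrite -!cats1 -!catA /= !size_cat /= !addn2 doubleS => - [size_a'] [size_b'].
move=> a_sorted b_step2 b_perm hat_perm.
have uv_xy := hat_perm_last_pair size_a' size_b' a_sorted b_step2 b_perm hat_perm.
have b'_perm : perm_eq b' a'.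
  rewrite -(perm_cat2r [:: u; v]); apply: perm_trans b_perm _.
  by rewrite perm_cat2l perm_sym.
have hat_b'_perm : perm_eq (hat b') (hat a').
  rewrite -(perm_cat2r [:: u + m.+1; v + m.+1]).
  apply: perm_trans (_ : perm_eq _ (hat a' ++ [:: x + m.+1; y + m.+1])) _.
    by move: hat_perm; rewrite !hat_cat_pair size_a' size_b' /= doubleK uphalf_double.
  by rewrite perm_cat2l perm_sym (perm_map (addn^~ m.+1) uv_xy).
have [b0 pairs] := IH a' b' size_a' size_b' (cat_sorted2 a_sorted).1
  (step2_incr_catl b_step2) b'_perm hat_b'_perm.
split; first by rewrite !nth_cat size_a' size_b'.
move=> k; rewrite ltnS leq_eqVlt => /orP [/eqP -> | ltkm].
  by rewrite /pair_at !nth_cat size_a' size_b' ltnn ltnNge leqnSn /= subnn subSnn.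
have [lt1 lt2] : k.*2.+1 < m.*2.+1 /\ k.*2.+2 < m.*2.+1 by split; lia.
by rewrite /pair_at !nth_cat size_a' size_b' lt1 lt2; apply: pairs.
Qed.

Lemma count_pred0_in (P : pred nat) (s : seq nat) :
  {in s, forall x, ~~ P x} -> count P s = 0.
Proof. by move=> nP; rewrite (eq_in_count (a2 := pred0)) ?count_pred0 // => x /nP/negbTE. Qed.

Lemma count_iota_split (P : pred nat) n q : q < n ->
  count P (iota 0 n) = count P (iota 0 q) + P q + count P (iota q.+1 (n - q.+1)).
Proof.
move=> ltqn; have {1}-> : n = q + (n - q.+1).+1 by lia.
by rewrite iotaD add0n count_cat /= addnA.
Qed.

Lemma count_iota_only_last (P : pred nat) q :
  (forall p, p.+1 < q -> ~~ P p) -> count P (iota 0 q) = (0 < q) && P q.-1.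
Proof.
case: q => [//|q] nP; rewrite -addn1 iotaD count_cat add0n /= addn0 addn1.
by rewrite count_pred0_in // => p; rewrite mem_iota => ltpq; apply: nP; lia.
Qed.

Lemma count_iota_only_head (P : pred nat) q k :
  (forall p, q < p -> p < q + k -> ~~ P p) -> count P (iota q k) = (0 < k) && P q.
Proof.
case: k => [//|k] nP; rewrite /= count_pred0_in ?addn0 // => p.
by rewrite mem_iota => qp; apply: nP; lia.
Qed.

Definition dup_at (a : seq nat) p :=
  [&& 0 < p, p < size a & nth 0 a p.-1 == nth 0 a p].
Definition single_at (a : seq nat) q := count_mem (nth 0 a q) a == 1.
Definition nsingle (a : seq nat) p := count (single_at a) (iota 0 p).

Section SingleEntries.

Variable a : seq nat.

Lemma nsingleS p : nsingle a p.+1 = nsingle a p + single_at a p.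
Proof. by rewrite /nsingle -addn1 iotaD count_cat /= addn0. Qed.

Lemma leq_nsingle p q : p <= q -> nsingle a p <= nsingle a q.
Proof. by move=> le_pq; rewrite /nsingle -(subnKC le_pq) iotaD count_cat leq_addr. Qed.

Lemma nth_Jseq_nsingle q : q < size a -> single_at a q ->
  nsingle a q < size (Jseq a) /\ nth 0 (Jseq a) (nsingle a q) = q.
Proof.
move=> ltq single_q.
have -> : Jseq a = filter (single_at a) (iota 0 q) ++
                   q :: filter (single_at a) (iota q.+1 (size a - q.+1)).
  rewrite /Jseq; have {1}-> : size a = q + (size a - q.+1).+1 by lia.
  by rewrite iotaD filter_cat add0n /= -/(single_at a q) single_q.
rewrite size_cat /= nth_cat size_filter -/(nsingle a q) ltnn subnn /=.
by split; first lia.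
Qed.

Lemma nth_JseqP s : s < size (Jseq a) ->
  [/\ single_at a (nth 0 (Jseq a) s), nth 0 (Jseq a) s < size a &
      nsingle a (nth 0 (Jseq a) s) = s].
Proof.
move=> lts; have := mem_nth 0 lts.
rewrite {1}/Jseq mem_filter mem_iota add0n /= => /andP [single_q ltq].
have [lt_rank nth_rank] := nth_Jseq_nsingle ltq single_q.
split => //; apply/eqP; rewrite -(nth_uniq 0 lt_rank lts) ?nth_rank //.
by rewrite filter_uniq // iota_uniq.
Qed.

Lemma nsingle_gap p q s : nsingle a p = s -> nsingle a q = s.+1 -> single_at a p ->
  forall r, p < r -> r < q -> ~~ single_at a r.
Proof.
move=> rank_p rank_q single_p r lt_pr lt_rq; apply/negP => single_r.
have := leq_nsingle lt_rq; have := leq_nsingle lt_pr.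
by rewrite !nsingleS rank_p rank_q single_p single_r /=; lia.
Qed.

Lemma Jseq_consecutive p q : p < q -> q < size a -> single_at a p -> single_at a q ->
  (forall r, p < r -> r < q -> ~~ single_at a r) ->
  [/\ (nsingle a p).+1 < size (Jseq a), nth 0 (Jseq a) (nsingle a p) = p
    & nth 0 (Jseq a) (nsingle a p).+1 = q].
Proof.
move=> lt_pq ltq single_p single_q no_single.
have rank_q : nsingle a q = (nsingle a p).+1.
  have {1}-> : q = p.+1 + (q - p.+1) by lia.
  rewrite /nsingle iotaD count_cat add0n -/(nsingle a p.+1) nsingleS single_p.
  rewrite count_pred0_in ?addn0 ?addn1 // => r.
  by rewrite mem_iota => /andP [lt_pr lt_rq]; apply: no_single; lia.
have [_ ->] := nth_Jseq_nsingle (ltn_trans lt_pq ltq) single_p.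
by have [] := nth_Jseq_nsingle ltq single_q; rewrite rank_q.
Qed.

Hypotheses (a_sorted : sorted leq a) (a_step2 : step2_incr a).

Lemma nth_lt_gap2 p q : p.+1 < q -> q < size a -> nth 0 a p < nth 0 a q.
Proof.
move=> lt_pq ltq; apply: leq_trans (a_step2 _) _; first lia.
by apply: (sorted_leq_nth leq_trans leqnn 0 a_sorted); rewrite ?inE //; lia.
Qed.

Lemma single_atE q : q < size a -> single_at a q = ~~ dup_at a q && ~~ dup_at a q.+1.
Proof.
move=> ltq; rewrite /single_at.
have -> : count_mem (nth 0 a q) a =
    count (fun p => nth 0 a p == nth 0 a q) (iota 0 (size a)).
  by rewrite -[X in count _ X](mkseq_nth 0 a) /mkseq count_map.
rewrite (count_iota_split _ ltq) /= eqxx count_iota_only_last; last first.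
  by move=> p lt_pq /=; rewrite eq_sym neq_ltn (nth_lt_gap2 lt_pq) ?orbT.
rewrite count_iota_only_head; last first.
  by move=> p lt_qp ltp /=; rewrite neq_ltn (nth_lt_gap2 lt_qp) ?orbT //; lia.
rewrite /dup_at ltq /= subn_gt0 [nth 0 a q.+1 == _]eq_sym.
by case: (_ && _); case: (_ && _).
Qed.

Lemma dup_at_exclusive p : ~~ (dup_at a p && dup_at a p.+1).
Proof.
apply/negP => /andP [/and3P [gt0p _ /eqP eq1] /and3P [_ ltp1 /eqP eq2]].
have lt_p : p.-1.+1 < p.+1 by lia.
by have := nth_lt_gap2 lt_p ltp1; rewrite eq1 -eq2 ltnn.
Qed.

Lemma odd_nsingle p : p <= size a -> odd (nsingle a p) = odd p (+) dup_at a p.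
Proof.
elim: p => [|p IH] lep; first by rewrite /nsingle /dup_at.
rewrite nsingleS oddD IH ?(ltnW lep) // (single_atE lep) [odd p.+1]/=.
have := dup_at_exclusive p.
by case: (dup_at a p); case: (dup_at a p.+1); case: (odd p).
Qed.

Lemma odd_nth_Jseq s : s < size (Jseq a) -> odd (nth 0 (Jseq a) s) = odd s.
Proof.
move=> lts; have [single_q ltq rank_q] := nth_JseqP lts.
move: single_q; rewrite single_atE // => /andP [/negbTE not_dup _].
by rewrite -{2}rank_q odd_nsingle ?(ltnW ltq) // not_dup addbF.
Qed.

Lemma dup_run_no_single j l : (forall t, j <= t -> t < l -> dup_at a t.*2.+3) ->
  forall r, j.*2.+1 < r -> r < l.*2.+2 -> ~~ single_at a r.
Proof.
move=> run r lt_jr lt_rl; have r_half := odd_double_half r.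
have ltr : r < size a by have /and3P [] := run l.-1 ltac:(lia) ltac:(lia); lia.
rewrite single_atE //; case: (boolP (odd r)) => odd_r; rewrite ?odd_r ?(negbTE odd_r) in r_half.
  by rewrite (_ : r = (r./2).-1.*2.+3) ?run //; lia.
by rewrite (_ : r.+1 = (r./2).-1.*2.+3) ?run ?andbF //; lia.
Qed.

Section SwappedPairs.

Variables (m : nat) (b : seq nat).
Hypotheses (size_a : size a = m.*2.+1) (size_b : size b = m.*2.+1).
Hypotheses (b_step2 : step2_incr b) (b0 : nth 0 b 0 = nth 0 a 0).
Hypothesis pairs_perm : forall k, k < m -> perm_eq (pair_at b k) (pair_at a k).

Definition swapped k := nth 0 b k.*2.+1 != nth 0 a k.*2.+1.

Lemma swappedE k : k < m -> swapped k ->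
  [/\ nth 0 b k.*2.+1 = nth 0 a k.*2.+2, nth 0 b k.*2.+2 = nth 0 a k.*2.+1
    & ~~ dup_at a k.*2.+2].
Proof.
move=> ltk; rewrite /swapped.
case: (perm_pair (pairs_perm ltk)) => [[-> _] | [-> ->] ne]; first by rewrite eqxx.
by split=> //; apply: contra ne => /and3P [_ _ /eqP ->].
Qed.

Lemma unswappedE k : k < m -> ~~ swapped k ->
  nth 0 b k.*2.+1 = nth 0 a k.*2.+1 /\ nth 0 b k.*2.+2 = nth 0 a k.*2.+2.
Proof.
move=> ltk; rewrite /swapped negbK => /eqP eq1.
by case: (perm_pair (pairs_perm ltk)) => [// | [eq2 ->]]; rewrite -eq2 eq1.
Qed.

(* [b_0 < b_2] keeps [a_0] and [a_1] apart when the first pair is swapped. *)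
Lemma swapped0_not_dup : 0 < m -> swapped 0 -> ~~ dup_at a 1.
Proof.
move=> gt0m sw0; have [_ b2 _] := swappedE gt0m sw0.
have := @b_step2 0; rewrite size_b b0 /= b2 => /(_ ltac:(lia)) lt_a01.
by rewrite /dup_at /= (ltn_eqF lt_a01) andbF.
Qed.

(* If exactly one of the pairs [k], [k+1] were swapped, [b] would contain
   the repeated value [a_{2k+2} = a_{2k+3}] at two indices at distance two. *)
Lemma swapped_dup k : k.+1 < m -> dup_at a k.*2.+3 -> swapped k = swapped k.+1.
Proof.
move=> ltk1 /and3P [_ _ /eqP dup]; have ltk : k < m by lia.
case: (boolP (swapped k)) => swk; case: (boolP (swapped k.+1)) => swk1 //.
- have [bk _ _] := swappedE ltk swk; have [bk1 _] := unswappedE ltk1 swk1.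
  rewrite doubleS in bk1.
  by have := @b_step2 k.*2.+1 ltac:(lia); rewrite bk bk1 -dup ltnn.
- have [_ bk1 _] := swappedE ltk1 swk1; have [_ bk] := unswappedE ltk swk.
  rewrite doubleS in bk1.
  by have := @b_step2 k.*2.+2 ltac:(lia); rewrite bk bk1 dup ltnn.
Qed.

Lemma swapped_run_start k : k < m -> swapped k ->
  exists j, [/\ j <= k, swapped j, single_at a j.*2.+1 &
    forall t, j <= t -> t < k -> dup_at a t.*2.+3].
Proof.
elim: k => [|k IH] ltk swk.
  exists 0; split=> //; rewrite single_atE ?size_a; last lia.
  by rewrite swapped0_not_dup //; have [_ _ ->] := swappedE ltk swk.
have [_ _] := swappedE ltk swk; rewrite doubleS => not_dup2.
case: (boolP (dup_at a k.*2.+3)) => [dup3 | not_dup3].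
  rewrite -swapped_dup // in swk.
  have [j [le_jk swj single_j run]] := IH (ltnW ltk) swk.
  exists j; split=> // [|t le_jt]; first lia.
  by rewrite ltnS leq_eqVlt => /predU1P [-> // | ]; apply: run.
exists k.+1; split=> // [|t]; last lia.
by rewrite single_atE ?size_a ?doubleS ?not_dup3 //; lia.
Qed.

Lemma swapped_run_end k : k < m -> swapped k ->
  exists l, [/\ k <= l, l < m, single_at a l.*2.+2 &
    forall t, k <= t -> t < l -> dup_at a t.*2.+3].
Proof.
have [d] := ubnP (m - k); elim: d k => // d IH k lt_mk ltk swk.
have [_ _ not_dup2] := swappedE ltk swk.
case: (boolP (dup_at a k.*2.+3)) => [dup3 | not_dup3].
  have ltk1 : k.+1 < m by move: dup3 => /and3P [_]; rewrite size_a; lia.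
  rewrite swapped_dup // in swk.
  have [l [le_kl ltl single_l run]] := IH k.+1 ltac:(lia) ltk1 swk.
  exists l; split=> // [|t]; first lia.
  by rewrite leq_eqVlt => /predU1P [<- // | ]; apply: run.
exists k; split=> // [|t]; last lia.
by rewrite single_atE ?not_dup2 ?size_a //; lia.
Qed.

(* Inside a block [i_s, i_{s+1}] with [i_s] odd, the pairs are linked by the
   repeated values [a_{2k+2} = a_{2k+3}], so they are all swapped or none. *)
Lemma swapped_block p q : q < size a -> (forall r, p < r -> r < q -> ~~ single_at a r) ->
  odd p -> swapped p./2 -> forall k, p <= k.*2.+1 -> k.*2.+2 <= q -> swapped k.
Proof.
move=> ltq no_single odd_p swp; have := odd_double_half p; rewrite odd_p => p_half.
elim=> [|k IH] le_pk le_kq.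
  have half0 : p./2 = 0 by lia.
  by rewrite half0 in swp.
rewrite doubleS in le_pk le_kq.
have [lt_pk | -> //] : p./2 < k.+1 \/ k.+1 = p./2 by lia.
have swk := IH ltac:(lia) ltac:(lia).
have ltk1 : k.+1 < m by lia.
rewrite -swapped_dup //; have [_ _ not_dup2] := swappedE (ltnW ltk1) swk.
have := no_single k.*2.+2 ltac:(lia) ltac:(lia).
by rewrite single_atE ?not_dup2 ?negbK //; lia.
Qed.

(* The set [X]: odd [s] whose block [[i_s, i_{s+1}]] is swapped in [b]. *)
Definition swapped_blocks :=
  [seq s <- iota 0 (size (Jseq a)) | odd s && (s.+1 < size (Jseq a)) &&
     (nth 0 b (nth 0 (Jseq a) s) != nth 0 a (nth 0 (Jseq a) s))].

Lemma nth_swapped_block s i : s.+1 < size (Jseq a) -> odd s ->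
  nth 0 b (nth 0 (Jseq a) s) != nth 0 a (nth 0 (Jseq a) s) ->
  in_block (Jseq a) i s ->
  nth 0 b i = if ~~ odd (i - nth 0 (Jseq a) s) then nth 0 a i.+1 else nth 0 a i.-1.
Proof.
move=> lts1 odd_s moved; rewrite /in_block.
have [single_p ltp rank_p] := nth_JseqP (ltnW lts1).
have [_ ltq rank_q] := nth_JseqP lts1.
have odd_p := odd_nth_Jseq (ltnW lts1); have odd_q := odd_nth_Jseq lts1.
move: single_p ltp rank_p ltq rank_q odd_p odd_q moved.
set p := nth 0 (Jseq a) s; set q := nth 0 (Jseq a) s.+1.
move=> single_p ltp rank_p ltq rank_q odd_p odd_q moved /andP [le_pi le_iq].
have lt_pq : p < q.
  by rewrite ltnNge; apply/negP => /leq_nsingle; rewrite rank_p rank_q ltnn.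
rewrite odd_s in odd_p; rewrite /= odd_s in odd_q.
have p_half := odd_double_half p; have q_half := odd_double_half q.
rewrite odd_p in p_half; rewrite odd_q in q_half.
have swp : swapped p./2 by rewrite /swapped (_ : (p./2).*2.+1 = p) //; lia.
have sw_block := swapped_block ltq (nsingle_gap rank_p rank_q single_p) odd_p swp.
have i_half := odd_double_half i.
rewrite oddB // odd_p addbT negbK.
case: (boolP (odd i)) => odd_i; rewrite ?odd_i ?(negbTE odd_i) in i_half *.
  have swk : swapped i./2 by apply: sw_block; lia.
  have [bi _ _] := swappedE (ltac:(lia) : i./2 < m) swk.
  by rewrite (_ : i = (i./2).*2.+1) //; lia.
have swk : swapped (i./2).-1 by apply: sw_block; lia.
have [_ bi _] := swappedE (ltac:(lia) : (i./2).-1 < m) swk.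
by rewrite (_ : i = (i./2).-1.*2.+2) ?bi //; lia.
Qed.

(* A swapped pair lies in a maximal run of swapped pairs linked by repeated
   values; its ends are unique entries of [a], at consecutive indices of
   [Jseq a], the first one odd. *)
Lemma swapped_in_block k : k < m -> swapped k ->
  exists s, [/\ s \in swapped_blocks, nth 0 (Jseq a) s <= k.*2.+1
              & k.*2.+2 <= nth 0 (Jseq a) s.+1].
Proof.
move=> ltk swk.
have [j [le_jk swj single_j run_j]] := swapped_run_start ltk swk.
have [l [le_kl ltl single_l run_l]] := swapped_run_end ltk swk.
have no_single : forall r, j.*2.+1 < r -> r < l.*2.+2 -> ~~ single_at a r.
  by apply: dup_run_no_single => t le_jt lt_tl; case: (ltnP t k) => [/run_j | /run_l]; apply.
have [lts1 nth_s nth_s1] := Jseq_consecutive (ltac:(lia) : j.*2.+1 < l.*2.+2)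
  (ltac:(lia) : l.*2.+2 < size a) single_j single_l no_single.
exists (nsingle a j.*2.+1); rewrite nth_s nth_s1; split; [|lia|lia].
have := odd_nth_Jseq (ltnW lts1); rewrite nth_s /= odd_double => odd_s.
by rewrite mem_filter mem_iota /= -odd_s lts1 (ltnW lts1) nth_s andbT.
Qed.

Lemma nth_outside_swapped_blocks i : i < size a ->
  ~~ has (in_block (Jseq a) i) swapped_blocks -> nth 0 b i = nth 0 a i.
Proof.
case: i => [// | i] lti not_in_block; have i_half := odd_double_half i.
have ltk : i./2 < m by lia.
case: (boolP (swapped i./2)) => swk.
  have [s [s_in le_s le_s1]] := swapped_in_block ltk swk.
  by case/hasP: not_in_block; exists s; rewrite // /in_block; apply/andP; split; lia.
have [b1 b2] := unswappedE ltk swk.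
case: (boolP (odd i)) => odd_i; rewrite ?odd_i ?(negbTE odd_i) in i_half.
  by rewrite (_ : i.+1 = (i./2).*2.+2) //; lia.
by rewrite (_ : i.+1 = (i./2).*2.+1) //; lia.
Qed.

Lemma aX_swapped_blocks : b = aX a swapped_blocks.
Proof.
apply: (@eq_from_nth _ 0); first by rewrite /aX size_map size_iota size_b size_a.
move=> i; rewrite size_b -size_a => lti.
rewrite /aX (nth_map 0) ?size_iota // nth_iota // add0n.
case: ifP => [has_i | /negbT]; last exact: nth_outside_swapped_blocks.
set s := nth 0 swapped_blocks _.
have : s \in swapped_blocks by apply: mem_nth; rewrite -has_find.
rewrite mem_filter => /andP [/andP [/andP [odd_s lts1] moved] _].
exact: nth_swapped_block lts1 odd_s moved (nth_find 0 has_i).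
Qed.

End SwappedPairs.

End SingleEntries.

Theorem lemma1p2 (N : nat) (a b : seq nat) :
  ~~ odd N ->
  size a = N.+1 -> sorted leq a -> step2_incr a ->
  size b = N.+1 -> step2_incr b -> perm_eq b a ->
  perm_eq (hat b) (hat a) ->
  exists X : seq nat,
    all (fun s => odd s && (s.+1 < size (Jseq a))) X /\ b = aX a X.
Proof.
move=> even_N size_a a_sorted a_step2 size_b b_step2 b_perm hat_perm.
have N_double : N = N./2.*2 by rewrite even_halfK.
rewrite N_double in size_a size_b.
have [b0 pairs_perm] := hat_perm_pairs size_a size_b a_sorted b_step2 b_perm hat_perm.
exists (swapped_blocks a b); split.
  by apply/allP => s; rewrite mem_filter => /andP [/andP [-> _] _].
exact: (aX_swapped_blocks a_sorted a_step2 size_a size_b b_step2 b0 pairs_perm).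
Qed.
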